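(* Let $M$ be a nonempty compact convex subset of a locally convex topological vector space $V$, and let $f:M\to M$ be continuous and quasi-affine. Then $f$ is strongly quasi-affine, i.e. $f(\overline{co}\,A)\subseteq\overline{co}\,f(A)$ for every subset $A\subseteq M$.
   Context: For $A\subseteq V$, $co\,A$ denotes the convex hull of $A$ and $\overline{co}\,A$ its closed convex hull. A map $f:M\to M$ is quasi-affine if $f(co\,A)\subseteq co\,f(A)$ for every subset $A\subseteq M$. *)

From HB Require Import structures.
From mathcomp Require Import all_boot all_order all_algebra.
From mathcomp Require Import all_classical all_reals all_analysis.
Set Implicit Arguments. Unset Strict Implicit. Unset Printing Implicit Defensive.
Import Order.TTheory GRing.Theory Num.Theory.
Local Open Scope classical_set_scope.
Local Open Scope ring_scope.

Definition co (R : realType) (V : tvsType R) (A : set V) : set V :=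
  \bigcap_(B in [set B : set V | convex_set (B : set (convex_lmodType V)) /\ A `<=` B]) B.

Definition cco (R : realType) (V : tvsType R) (A : set V) : set V :=
  \bigcap_(B in [set B : set V |
     [/\ convex_set (B : set (convex_lmodType V)), closed B & A `<=` B]]) B.

Definition quasi_affine (R : realType) (V : tvsType R) (M : set V) (f : V -> V) :=
  forall A, A `<=` M -> f @` (co A) `<=` co (f @` A).

Definition strongly_quasi_affine (R : realType) (V : tvsType R) (M : set V) (f : V -> V) :=
  forall A, A `<=` M -> f @` (cco A) `<=` cco (f @` A).

From HB Require Import structures.
From mathcomp Require Import all_boot all_order all_algebra.
From mathcomp Require Import all_classical all_reals all_analysis.
Import Order.TTheory GRing.Theory Num.Theory.
Local Open Scope classical_set_scope.
Local Open Scope ring_scope.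
Local Open Scope convex_scope.

(* In a topological vector space the closure of a convex set is convex, so the
   closed convex hull of A is the closure of its convex hull co A.  Since M is
   closed and convex, this closure lies in M, where f is continuous; hence
   f (cco A) lies in the closure of f (co A), which is contained in
   co (f A) by quasi-affinity, and so in its closure cco (f A). *)

Lemma within_continuous_image_closure {T U : topologicalType} {M D : set T}
    {f : T -> U} :
  {within M, continuous f} -> D `<=` M ->
  f @` (closure D `&` M) `<=` closure (f @` D).
Proof.
move=> fc DM _ [x [clDx Mx] <-] B /((subspace_continuousP M f).1 fc x Mx).
move=> /clDx [y [Dy By]].
by exists (f y); split; [exists y | exact: By (DM y Dy)].
Qed.

Section convex_hull.
Context {R : realType} {V : tvsType R}.
Implicit Types A B : set V.

Lemma co_convex A : convex_set (co A : set (convex_lmodType V)).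
Proof.
move=> x y l; rewrite !inE => coAx coAy B [cB AB].
by have := cB x y l; rewrite !inE; apply; [exact: coAx | exact: coAy].
Qed.

Lemma sub_co A : A `<=` co A.
Proof. by move=> x Ax B [_ AB]; exact: AB. Qed.

Lemma co_sub {A B} : convex_set (B : set (convex_lmodType V)) -> A `<=` B ->
  co A `<=` B.
Proof. by move=> cB AB x; apply. Qed.

Lemma cco_sub {A B} : convex_set (B : set (convex_lmodType V)) -> closed B ->
  A `<=` B -> cco A `<=` B.
Proof. by move=> cB clB AB x; apply. Qed.

Lemma lincomb2_continuous (a b : R) :
  continuous (fun p : V * V => a *: p.1 + b *: p.2).
Proof.
move=> [x y].
apply: (@continuous2_cvg _ V V V _ _ (fun p : V * V => a *: p.1)
  (fun p : V * V => b *: p.2) +%R); first exact: (add_continuous (_, _)).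
- apply: (@continuous2_cvg _ R^o V V _ _ (fun=> a) fst (fun k v => k *: v)).
  + exact: (scale_continuous (_, _)).
  + exact: cvg_cst.
  + exact: cvg_fst.
- apply: (@continuous2_cvg _ R^o V V _ _ (fun=> b) snd (fun k v => k *: v)).
  + exact: (scale_continuous (_, _)).
  + exact: cvg_cst.
  + exact: cvg_snd.
Qed.

Lemma closure_convex A : convex_set (A : set (convex_lmodType V)) ->
  convex_set (closure A : set (convex_lmodType V)).
Proof.
move=> cA x y l; rewrite !inE => clAx clAy B.
move=> /(lincomb2_continuous l%:num (1 - l%:num) (x, y)).
move=> [[Bx By] /= [nBx nBy] sB].
have [a [Aa Bxa]] := clAx _ nBx.
have [b [Ab Byb]] := clAy _ nBy.
exists ((a : convex_lmodType V) <| l |> b); split; last exact: (sB (a, b)).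
by have := cA a b l; rewrite !inE; exact.
Qed.

Lemma cco_closure_co A : cco A = closure (co A).
Proof.
apply/seteqP; split.
  apply: cco_sub; [exact/closure_convex/co_convex | exact: closed_closure |].
  by move=> x /sub_co /subset_closure.
move=> x clcoAx B [cB clB AB]; rewrite (closure_id B).1 //.
exact: (closureS (co_sub cB AB)) clcoAx.
Qed.

End convex_hull.

Theorem mainTheorem4 (R : realType) (V : tvsType R) (hV : hausdorff_space V)
  (M : set V) (f : V -> V) :
  M !=set0 -> compact M -> convex_set (M : set (convex_lmodType V)) ->
  f @` M `<=` M -> {within M, continuous f} -> quasi_affine M f ->
  strongly_quasi_affine M f.
Proof.
move=> _ cptM cvxM _ fc qaf A AM; rewrite !cco_closure_co.
have coAM : co A `<=` M := co_sub cvxM AM.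
have clcoAM : closure (co A) `<=` M.
  by rewrite [M](closure_id M).1; [exact: closureS | exact: compact_closed].
move=> _ [x clcoAx <-]; apply: (closureS (qaf A AM)).
apply: (within_continuous_image_closure fc coAM).
by exists x; split; last exact: clcoAM.
Qed.
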